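(* Let $n\ge 3$ and let $\Gamma\subset GL(n,\mathbb R)$ be the group of block matrices $\begin{pmatrix} A & b\\ 0 & 1\end{pmatrix}$ with $A\in GL(n-1,\mathbb Z)$ and $b\in\mathbb Z^{n-1}$, acting linearly on $\mathbb R^n$. Then every non-zero $x\in\mathbb R^n$ has unbounded $\Gamma$-orbit (so the action of $\Gamma$ on $\mathbb R^n$ is expansive), yet no element $\gamma\in\Gamma$ is an expansive automorphism of $\mathbb R^n$, i.e. for no $\gamma\in\Gamma$ does the cyclic group $\{\gamma^m:m\in\mathbb Z\}$ act expansively on $\mathbb R^n$.
   Context: An action of a group $\Gamma$ on $\mathbb R^n$ (additive topological group) by linear automorphisms is expansive if there is a neighborhood $U$ of $0$ with $\bigcap_{\gamma\in\Gamma}\gamma^{-1}(U)=\{0\}$. *)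

From HB Require Import structures.
From mathcomp Require Import all_boot all_order all_algebra.
From mathcomp Require Import all_classical all_reals all_analysis.
Set Implicit Arguments. Unset Strict Implicit. Unset Printing Implicit Defensive.
Import Order.TTheory GRing.Theory Num.Theory.
Import numFieldNormedType.Exports.
Local Open Scope classical_set_scope.
Local Open Scope ring_scope.

Definition intmx (R : realType) (p q : nat) (A : 'M[int]_(p, q)) : 'M[R]_(p, q) :=
  map_mx (fun z : int => z%:~R) A.

(* Gamma (for n = m + 1): the block matrices [[A, b], [0, 1]] with
   A in GL(m, Z) and b in Z^m. *)
Definition Gamma (R : realType) (m : nat) : set 'M[R]_(m + 1) :=
  [set M | exists (A : 'M[int]_m) (b : 'cV[int]_m),
      A \in unitmx /\
      M = block_mx (intmx R A) (intmx R b) 0 (1%:M : 'M[R]_1)].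

Arguments Gamma R m : clear implicits.

Definition expansive (R : realType) (n : nat) (G : set 'M[R]_n) : Prop :=
  exists U : set 'cV[R]_n, nbhs (0 : 'cV[R]_n) U /\
    \bigcap_(g in G) ((fun x : 'cV[R]_n => g *m x) @^-1` U) = [set 0].

Definition cyclic_group (R : realType) (n : nat) (g : 'M[R]_n) : set 'M[R]_n :=
  [set M | exists k : nat, M = iter k (mulmx g) 1%:M \/
                           M = iter k (mulmx (invmx g)) 1%:M].

Definition bounded_orbit (R : realType) (n : nat) (G : set 'M[R]_n)
  (x : 'cV[R]_n) : Prop :=
  exists C : R, forall g, G g -> `|g *m x| <= C.

From HB Require Import structures.
From mathcomp Require Import all_boot all_order all_algebra.
From mathcomp Require Import all_classical all_reals all_analysis.
From mathcomp Require Import lra.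
Import Order.TTheory GRing.Theory Num.Theory.
Import numFieldNormedType.Exports.
Set Implicit Arguments. Unset Strict Implicit. Unset Printing Implicit Defensive.
Local Open Scope classical_set_scope.
Local Open Scope ring_scope.

(* Write x = (y, t) with t real.  If t <> 0, the translations by k e_i send the
   i-th coordinate of x to y_i + k t; if t = 0, some y_j <> 0 and, as m >= 2,
   the transvections I + k E_ij with i <> j send it to y_i + k y_j.  So every
   nonzero orbit is unbounded, and the unit ball witnesses expansivity.
   Conversely every element of Gamma has last row (0, 1), hence
   det (g - 1) = 0 and g fixes some w <> 0; the whole cyclic group then fixes
   the line through w, which meets every neighbourhood of 0. *)

Lemma mx_norm_entry_le (R : realDomainType) p q (M : 'M[R]_(p, q)) i j :
  `|M i j| <= `|M|.
Proof.
have /mapP[k Hk ->] : `|M i j| \in [seq `|M x.1 x.2| | x : 'I_p * 'I_q].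
  by apply/mapP; exists (i, j) => //=; rewrite mem_enum.
change `|M| with (mx_norm M); rewrite mx_normrE.
by apply/bigmax_geP; right; exists k.
Qed.

Lemma arith_progression_bounded_eq0 (R : archiRealFieldType) (a b C : R) :
  (forall k : nat, `|a + k%:R * b| <= C) -> b = 0.
Proof.
move=> bounded; apply/eqP; apply: contraT => b_neq0.
have b_gt0 : 0 < `|b| by rewrite normr_gt0.
have C_ge0 : 0 <= C by apply: le_trans (bounded 0%N).
have := archi_boundP (divr_ge0 (addr_ge0 C_ge0 (normr_ge0 a)) (ltW b_gt0)).
set k := Num.bound _; rewrite ltr_pdivrMr // => k_big.
have : `|k%:R * b| - `|a| <= `|a + k%:R * b| by rewrite (addrC a) lerB_normD.
rewrite normrM normr_nat => /le_trans /(_ (bounded k)).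
by move: k_big; lra.
Qed.

Lemma delta_mulmx_entry (R : pzSemiRingType) p q r (i : 'I_p) (j : 'I_q)
    (y : 'M[R]_(q, r)) l :
  (delta_mx i j *m y) i l = y j l.
Proof.
rewrite mxE (bigD1 j) //= big1 ?addr0; first by rewrite mxE !eqxx mul1r.
by move=> a /negbTE ha; rewrite mxE ha andbF mul0r.
Qed.

Lemma exists_ord_neq n (j : 'I_n) : (1 < n)%N -> exists i : 'I_n, i != j.
Proof.
move=> n_gt1; have /card_gt0P[i] : (0 < #|predC1 j|)%N.
  by rewrite cardC1 card_ord -subn1 subn_gt0.
by exists i.
Qed.

Lemma unitmx_transvection (R : comUnitRingType) n (i j : 'I_n) (a : R) :
  i != j -> 1%:M + a *: delta_mx i j \in unitmx.
Proof.
move=> ij.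
suff : (1%:M + a *: delta_mx i j) *m (1%:M - a *: delta_mx i j) = 1%:M.
  by case/mulmx1_unit.
rewrite mulmxDl !mulmxBr !mul1mx mulmx1 -scalemxAl -scalemxAr.
by rewrite mul_delta_mx_0 1?eq_sym // !scaler0 subr0 subrK.
Qed.

Lemma not_bounded_orbit_of_progression (R : realType) n (G : set 'M[R]_n)
    (x : 'cV[R]_n) i (a b : R) :
  b != 0 -> (forall k : nat, exists2 g, G g & (g *m x) i 0 = a + k%:R * b) ->
  ~ bounded_orbit G x.
Proof.
move=> /eqP b_neq0 progression [C bounded]; apply: b_neq0.
apply: (@arith_progression_bounded_eq0 _ a _ C) => k.
have [g Gg <-] := progression k.
by apply: le_trans (bounded g Gg); exact: mx_norm_entry_le.
Qed.

Lemma expansive_of_unbounded_orbits (R : realType) n (G : set 'M[R]_n) :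
  (forall x, x != 0 -> ~ bounded_orbit G x) -> expansive G.
Proof.
move=> unbounded; exists [set x | `|x| < 1].
split; first exact: (@nbhs0_lt R 'cV[R]_n 1 ltr01).
apply/seteqP; split => x /=; last first.
  by move=> -> g _ /=; rewrite mulmx0 normr0 ltr01.
move=> small; apply: contrapT => /eqP x_neq0; apply: (unbounded x x_neq0).
by exists 1 => g Gg; exact/ltW/small.
Qed.

Lemma not_expansive_of_common_fixed (R : realType) n (G : set 'M[R]_n)
    (w : 'cV[R]_n) :
  w != 0 -> (forall g, G g -> g *m w = w) -> ~ expansive G.
Proof.
move=> w_neq0 fixed [U [/nbhs_norm0P[e /= e_gt0 ball_sub] trivial]].
have w_gt0 : 0 < `|w| by rewrite normr_gt0.
pose c := e / 2 / `|w|.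
have c_gt0 : 0 < c by rewrite !divr_gt0.
suff : [set 0] (c *: w).
  by move=> /= /eqP; rewrite scaler_eq0 (negbTE w_neq0) gt_eqF.
rewrite -trivial => g Gg /=; rewrite -scalemxAr fixed //.
by apply: ball_sub; rewrite /= normrZ gtr0_norm // divfK ?gt_eqF //; lra.
Qed.

Lemma cyclic_group_fixed (R : realType) n (g : 'M[R]_n) (w : 'cV[R]_n) :
  g *m w = w -> forall M, cyclic_group g M -> M *m w = w.
Proof.
have iter_fixed h : h *m w = w -> forall k, iter k (mulmx h) 1%:M *m w = w.
  by move=> hw; elim=> [|k IHk] /=; rewrite ?mul1mx // -mulmxA IHk.
move=> gw M [k [->|->]]; apply: iter_fixed => //.
by have [g_unit|/invmx_out->//] := boolP (g \in unitmx); rewrite -{1}gw mulKmx.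
Qed.

Lemma det_affine_sub1 (R : comNzRingType) m (A : 'M[R]_m) (b : 'cV[R]_m) :
  \det (block_mx A b 0 1%:M - 1%:M) = 0.
Proof.
rewrite (scalar_mx_block m 1 1) opp_block_mx add_block_mx subrr.
by rewrite det_ublock subrr det0 mulr0.
Qed.

Lemma fixed_vector_of_det_sub1 (R : fieldType) n (g : 'M[R]_n) :
  \det (g - 1%:M) = 0 -> exists2 w : 'cV[R]_n, w != 0 & g *m w = w.
Proof.
move=> /eqP; rewrite -det_tr => /det0P[v v_neq0 v_ker].
exists v^T; first by rewrite trmx_eq0.
have : ((g - 1%:M) *m v^T)^T = 0 by rewrite trmx_mul trmxK v_ker.
by rewrite -trmx0 => /trmx_inj/eqP; rewrite mulmxBl mul1mx subr_eq0 => /eqP.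
Qed.

Section Gamma.
Variables (R : realType) (m : nat).
Implicit Types (y : 'cV[R]_m) (t : 'cV[R]_1).

Lemma Gamma_mul_col (A : 'M[int]_m) (b : 'cV[int]_m) y t :
  block_mx (intmx R A) (intmx R b) 0 1%:M *m col_mx y t =
  col_mx (intmx R A *m y + intmx R b *m t) t.
Proof. by rewrite mul_block_col !mul0mx mul1mx add0r. Qed.

Lemma Gamma_translation (i : 'I_m) (k : nat) y t :
  exists2 g, Gamma R m g &
    (g *m col_mx y t) (lshift 1 i) 0 = y i 0 + k%:R * t 0 0.
Proof.
exists (block_mx (intmx R 1%:M) (intmx R (k%:Z *: delta_mx i 0)) 0 1%:M).
  by exists 1%:M, (k%:Z *: delta_mx i 0); rewrite unitmx1.
rewrite Gamma_mul_col col_mxEu /intmx map_mx1 map_mxZ map_delta_mx mul1mx.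
by rewrite -scalemxAl mxE [X in _ + X]mxE delta_mulmx_entry.
Qed.

Lemma Gamma_transvection (i j : 'I_m) (k : nat) y t : i != j ->
  exists2 g, Gamma R m g &
    (g *m col_mx y t) (lshift 1 i) 0 = y i 0 + k%:R * y j 0.
Proof.
move=> ij; pose A := 1%:M + k%:Z *: delta_mx i j.
exists (block_mx (intmx R A) (intmx R 0) 0 1%:M).
  by exists A, 0; rewrite unitmx_transvection.
rewrite Gamma_mul_col col_mxEu /intmx map_mxD map_mx1 map_mxZ map_delta_mx.
by rewrite map_mx0 mul0mx addr0 mulmxDl mul1mx -scalemxAl mxE [X in _ + X]mxE
  delta_mulmx_entry.
Qed.

Lemma Gamma_orbit_unbounded : (1 < m)%N ->
  forall x : 'cV[R]_(m + 1), x != 0 -> ~ bounded_orbit (Gamma R m) x.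
Proof.
move=> m_gt1 x; rewrite -[x]vsubmxK; set y := usubmx x; set t := dsubmx x.
move=> x_neq0; have [t_eq0|t_neq0] := eqVneq (t 0 0) 0; last first.
  pose i0 : 'I_m := Ordinal (ltnW m_gt1).
  exact: not_bounded_orbit_of_progression t_neq0
    (fun k => Gamma_translation i0 k y t).
have y_neq0 : y != 0.
  apply: contraNneq x_neq0 => ->; rewrite col_mx_eq0 eqxx /=.
  by apply/eqP/matrixP => a b; rewrite !ord1 t_eq0 mxE.
have [j yj_neq0] : exists j, y j 0 != 0.
  apply/existsP; apply: contraNT y_neq0 => /existsPn y0.
  by apply/eqP/colP => j; rewrite [RHS]mxE; apply/eqP/negbNE; exact: y0.
have [i ij] := exists_ord_neq j m_gt1.
exact: not_bounded_orbit_of_progression yj_neq0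
  (fun k => Gamma_transvection k y t ij).
Qed.

Lemma Gamma_fixed_vector g :
  Gamma R m g -> exists2 w : 'cV[R]_(m + 1), w != 0 & g *m w = w.
Proof.
by move=> [A [b [_ ->]]]; apply: fixed_vector_of_det_sub1; exact: det_affine_sub1.
Qed.

End Gamma.

Theorem mainTheorem11 (R : realType) (m : nat) (hm : (2 <= m)%N) :
  (forall x : 'cV[R]_(m + 1), x != 0 -> ~ bounded_orbit (Gamma R m) x) /\
  expansive (Gamma R m) /\
  (forall g : 'M[R]_(m + 1), Gamma R m g -> ~ expansive (cyclic_group g)).
Proof.
have unbounded := @Gamma_orbit_unbounded R m hm.
split; first exact: unbounded.
split; first exact: expansive_of_unbounded_orbits.
move=> g /Gamma_fixed_vector[w w_neq0 gw].
exact: not_expansive_of_common_fixed w_neq0 (cyclic_group_fixed gw).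
Qed.
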